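(* For every integer $r\ge0$, $$\sum_{i=1}^\infty(a_{i+1}-a_i)\,i^r\le 2\,r!,$$ where $a_i=(1-2^{1-2i})\zeta(2i)$ and $\zeta$ is the Riemann zeta function.
   Context: $\zeta$ denotes the Riemann zeta function. *)

From Stdlib Require Import Reals Arith.
From Coquelicot Require Import Coquelicot.
Open Scope R_scope.

(* Riemann zeta function on the half-line s > 1, via its Dirichlet series
   zeta s = sum_{n>=1} n^{-s}.  (Only used at s = 2i, i >= 1.) *)
Definition zeta (s : R) : R := Series (fun n : nat => / Rpower (INR (S n)) s).

Definition a (i : nat) : R :=
  (1 - Rpower 2 (1 - 2 * INR i)) * zeta (2 * INR i).

(* With eta(s) = sum_{m >= 1} (-1)^(m+1) m^(-s) = (1 - 2^(1-s)) zeta(s) we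
   have a_i = eta(2i), so
     a_(i+1) - a_i = sum_{m >= 2} (-1)^m m^(-2i) (1 - m^(-2))
   is an alternating series with decreasing terms: it lies between 0 and its
   first term (3/4) 4^(-i).  Since i^r <= r! e^i, the series of the lemma is
   dominated by (3/4) r! sum_{i >= 1} q^i = (3/4) r! q / (1 - q) with
   q = e/4 <= 8/11, and this is at most 2 r!. *)

From Stdlib Require Import Reals Arith Lra Lia.
From Coquelicot Require Import Coquelicot.
Open Scope R_scope.

Lemma INR_S_ge_1 (n : nat) : 1 <= INR (S n).
Proof. rewrite S_INR; pose proof (pos_INR n); lra. Qed.

Lemma inv_sq_S_bounds (n : nat) : 0 < / INR (S n) ^ 2 <= 1.
Proof.
  pose proof (INR_S_ge_1 n).
  split; [apply Rinv_0_lt_compat; nra|].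
  rewrite <- Rinv_1; apply Rinv_le_contravar; nra.
Qed.

(* (n+1)^(-2i): the index n stands for the integer n + 1. *)
Definition zterm (i n : nat) : R := (/ INR (S n) ^ 2) ^ i.

Lemma zterm_S (i n : nat) : zterm (S i) n = / INR (S n) ^ 2 * zterm i n.
Proof. reflexivity. Qed.

Lemma zterm_pos (i n : nat) : 0 < zterm i n.
Proof. apply pow_lt, inv_sq_S_bounds. Qed.

Lemma zterm_le_inv_sq (i n : nat) :
  (1 <= i)%nat -> zterm i n <= / INR (S n) ^ 2.
Proof.
  intro Hi; destruct i as [|j]; [lia|].
  rewrite zterm_S; pose proof (inv_sq_S_bounds n).
  assert (zterm j n <= 1) by (rewrite <- (pow1 j); apply pow_incr; lra).
  pose proof (zterm_pos j n); nra.
Qed.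

Lemma zterm_double (i k : nat) : zterm i (S (2 * k)) = / 4 ^ i * zterm i k.
Proof.
  unfold zterm; pose proof (INR_S_ge_1 k).
  replace (INR (S (S (2 * k)))) with (2 * INR (S k))
    by (rewrite !S_INR, mult_INR; simpl; lra).
  replace (/ (2 * INR (S k)) ^ 2) with (/ 4 * / INR (S k) ^ 2) by (field; lra).
  now rewrite Rpow_mult_distr, pow_inv.
Qed.

Lemma zeta_even (i : nat) : zeta (2 * INR i) = Series (zterm i).
Proof.
  apply Series_ext; intro n; unfold zterm; pose proof (INR_S_ge_1 n).
  replace (2 * INR i) with (INR (2 * i)) by (rewrite mult_INR; simpl; lra).
  now rewrite Rpower_pow, pow_mult, pow_inv by lra.
Qed.

Lemma Rpower_2_1_sub_double (i : nat) : Rpower 2 (1 - 2 * INR i) = 2 / 4 ^ i.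
Proof.
  unfold Rminus; rewrite Rpower_plus, Rpower_Ropp, Rpower_1 by lra.
  replace (2 * INR i) with (INR (2 * i)) by (rewrite mult_INR; simpl; lra).
  rewrite Rpower_pow, pow_mult by lra.
  unfold Rdiv; do 3 f_equal; lra.
Qed.

Lemma a_eq (i : nat) : a i = (1 - 2 / 4 ^ i) * Series (zterm i).
Proof. unfold a; now rewrite Rpower_2_1_sub_double, zeta_even. Qed.

Lemma is_series_telescope_inv :
  is_series (fun n => / INR (S n) - / INR (S (S n))) 1.
Proof.
  enough (H : is_lim_seq (sum_n (fun n => / INR (S n) - / INR (S (S n)))) 1)
    by exact H.
  apply (is_lim_seq_ext (fun N => 1 - / INR (S (S N)))).
  - intro N; rewrite sum_n_Reals; induction N as [|N IH].
    + simpl; lra.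
    + rewrite tech5, <- IH; ring.
  - replace (Finite 1) with (Finite (1 - 0)) by (f_equal; lra).
    apply is_lim_seq_minus'; [apply is_lim_seq_const|].
    apply (is_lim_seq_ext (fun n => / INR (n + 2))).
    + intro n; now replace (n + 2)%nat with (S (S n)) by lia.
    + apply (is_lim_seq_incr_n (fun n => / INR n) 2).
      pose proof (is_lim_seq_inv _ _ is_lim_seq_INR) as H; now apply H.
Qed.

Lemma inv_sq_le_telescope (n : nat) :
  / INR (S n) ^ 2 <= 2 * (/ INR (S n) - / INR (S (S n))).
Proof.
  pose proof (INR_S_ge_1 n); rewrite (S_INR (S n)); set (m := INR (S n)) in *.
  replace (2 * (/ m - / (m + 1))) with (/ m ^ 2 + (m - 1) / (m ^ 2 * (m + 1)))
    by (field; lra).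
  assert (0 <= (m - 1) / (m ^ 2 * (m + 1)))
    by (apply Rdiv_le_0_compat; nra).
  lra.
Qed.

Lemma ex_series_zterm (i : nat) : (1 <= i)%nat -> ex_series (zterm i).
Proof.
  intro Hi.
  apply (@ex_series_le R_AbsRing R_CompleteNormedModule _
           (fun n => 2 * (/ INR (S n) - / INR (S (S n))))).
  - intro n; change (norm (zterm i n)) with (Rabs (zterm i n)).
    rewrite Rabs_pos_eq by (left; apply zterm_pos).
    eapply Rle_trans; [apply zterm_le_inv_sq, Hi | apply inv_sq_le_telescope].
  - exact (ex_intro _ _ (is_series_scal_l 2 _ _ is_series_telescope_inv)).
Qed.

Lemma is_lim_seq_sum_zterm (i : nat) :
  (1 <= i)%nat -> is_lim_seq (sum_f_R0 (zterm i)) (Series (zterm i)).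
Proof.
  intro Hi; apply (is_lim_seq_ext (sum_n (zterm i))).
  - intro N; apply sum_n_Reals.
  - exact (Series_correct _ (ex_series_zterm i Hi)).
Qed.

(* Partial sums with an even number of terms of the alternating series
   sum_{n >= 1} (-1)^(n+1) n^(-2i), whose sum is a i. *)
Definition eta_partial (i N : nat) : R :=
  sum_f_R0 (fun n => (-1) ^ n * zterm i n) (S (2 * N)).

(* Removing the even terms twice from the partial sums of zeta. *)
Lemma eta_partial_eq (i N : nat) :
  eta_partial i N =
  sum_f_R0 (zterm i) (S (2 * N)) - 2 / 4 ^ i * sum_f_R0 (zterm i) N.
Proof.
  unfold eta_partial; induction N as [|N IH].
  - pose proof (zterm_double i 0) as H; simpl in H |- *; rewrite H; lra.
  - replace (S (2 * S N)) with (S (S (S (2 * N)))) by lia.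
    set (f := fun n => (-1) ^ n * zterm i n) in *.
    rewrite (tech5 f), (tech5 f), IH, (tech5 (zterm i) (S (S (2 * N)))),
      (tech5 (zterm i) (S (2 * N))), (tech5 (zterm i) N); unfold f.
    replace (S (S (2 * N))) with (2 * S N)%nat by lia.
    rewrite pow_1_even, pow_1_odd, zterm_double; lra.
Qed.

Lemma is_lim_seq_eta_partial (i : nat) :
  (1 <= i)%nat -> is_lim_seq (eta_partial i) (a i).
Proof.
  intro Hi.
  apply (is_lim_seq_ext _ _ _ (fun N => eq_sym (eta_partial_eq i N))).
  rewrite a_eq.
  replace ((1 - 2 / 4 ^ i) * Series (zterm i))
    with (Series (zterm i) - 2 / 4 ^ i * Series (zterm i)) by ring.
  apply is_lim_seq_minus'.
  - apply (is_lim_seq_subseq (sum_f_R0 (zterm i)) _ (fun N => S (2 * N))).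
    + apply eventually_subseq; intro n; lia.
    + now apply is_lim_seq_sum_zterm.
  - now apply (is_lim_seq_scal_l _ _ (Series (zterm i))), is_lim_seq_sum_zterm.
Qed.

Lemma alternating_sum_bounds (h : nat -> R) :
  (forall n, 0 <= h n) -> (forall n, h (S n) <= h n) ->
  forall N, h (2 * N)%nat <= sum_f_R0 (fun n => (-1) ^ n * h n) (2 * N) <= h O.
Proof.
  intros Hpos Hdecr N; induction N as [|N IH].
  - simpl; lra.
  - replace (2 * S N)%nat with (S (S (2 * N))) by lia.
    pose proof (Hdecr (2 * N)%nat); pose proof (Hdecr (S (2 * N))).
    rewrite !tech5, pow_1_odd.
    replace (S (S (2 * N))) with (2 * S N)%nat in * by lia.
    rewrite pow_1_even; lra.
Qed.

Definition zterm_gap (i n : nat) : R := zterm i n - zterm (S i) n.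

Lemma zterm_gap_nonneg (i n : nat) : 0 <= zterm_gap i n.
Proof.
  unfold zterm_gap; rewrite zterm_S.
  pose proof (inv_sq_S_bounds n); pose proof (zterm_pos i n); nra.
Qed.

Lemma zterm_gap_1 (i : nat) : zterm_gap i 1 = 3 / 4 / 4 ^ i.
Proof.
  unfold zterm_gap; rewrite zterm_S; unfold zterm.
  replace (/ INR 2 ^ 2) with (/ 4) by (simpl; field).
  rewrite pow_inv; field; apply pow_nonzero; lra.
Qed.

(* At the integer m >= 2 the gap is x^i (1 - x) with x = m^(-2) <= 1/4,
   and x (1 - x) increases on [0, 1/2]. *)
Lemma zterm_gap_decr (i n : nat) :
  (1 <= i)%nat -> zterm_gap i (S (S n)) <= zterm_gap i (S n).
Proof.
  intro Hi; unfold zterm_gap; rewrite !zterm_S; unfold zterm.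
  assert (Hm : 2 <= INR (S (S n)))
    by (rewrite !S_INR; pose proof (pos_INR n); lra).
  rewrite (S_INR (S (S n))); set (m := INR (S (S n))) in *.
  set (X := / m ^ 2); set (Y := / (m + 1) ^ 2).
  assert (HX : 0 < X <= / 4).
  { split; [apply Rinv_0_lt_compat; nra | apply Rinv_le_contravar; nra]. }
  assert (HY : 0 < Y < X).
  { split; [apply Rinv_0_lt_compat; nra | apply Rinv_lt_contravar; nra]. }
  destruct i as [|j]; [lia|].
  assert (Y ^ j <= X ^ j) by (apply pow_incr; lra).
  assert (0 <= Y ^ j) by (apply pow_le; lra).
  assert (0 <= Y * (1 - Y) <= X * (1 - X)) by nra.
  replace (Y ^ S j - Y * Y ^ S j) with (Y ^ j * (Y * (1 - Y))) by (simpl; ring).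
  replace (X ^ S j - X * X ^ S j) with (X ^ j * (X * (1 - X))) by (simpl; ring).
  apply Rmult_le_compat; lra.
Qed.

(* The gap vanishes at n = 0 (the term 1^(-2i) is the same for all i), so
   the difference of the two alternating sums starts with the gap at n = 1. *)
Lemma eta_partial_succ_sub (i N : nat) :
  eta_partial (S i) N - eta_partial i N =
  sum_f_R0 (fun n => (-1) ^ n * zterm_gap i (S n)) (2 * N).
Proof.
  unfold eta_partial; rewrite <- minus_sum, decomp_sum by lia.
  change (pred (S (2 * N))) with (2 * N)%nat.
  assert (Hz0 : forall k, zterm k 0 = 1).
  { intro k; unfold zterm.
    replace (/ INR 1 ^ 2) with 1 by (simpl; field); apply pow1. }
  rewrite !Hz0, Rminus_diag, Rplus_0_l; apply sum_eq; intros n _.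
  unfold zterm_gap; simpl; ring.
Qed.

Lemma a_succ_sub_bounds (i : nat) :
  (1 <= i)%nat -> 0 <= a (S i) - a i <= 3 / 4 / 4 ^ i.
Proof.
  intro Hi.
  assert (Hlim : is_lim_seq (fun N => eta_partial (S i) N - eta_partial i N)
                   (a (S i) - a i))
    by (apply is_lim_seq_minus'; apply is_lim_seq_eta_partial; lia).
  assert (Hbounds : forall N, 0 <= eta_partial (S i) N - eta_partial i N
                               <= 3 / 4 / 4 ^ i).
  { intro N; rewrite eta_partial_succ_sub, <- zterm_gap_1.
    pose proof (zterm_gap_nonneg i (S (2 * N))).
    pose proof (alternating_sum_bounds (fun n => zterm_gap i (S n))
                  (fun n => zterm_gap_nonneg i (S n))
                  (fun n => zterm_gap_decr i n Hi) N).
    simpl in *; lra. }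
  split.
  - exact (is_lim_seq_le (fun _ => 0) _ 0 _ (fun N => proj1 (Hbounds N))
             (is_lim_seq_const 0) Hlim).
  - exact (is_lim_seq_le _ (fun _ => 3 / 4 / 4 ^ i) _ _
             (fun N => proj2 (Hbounds N)) Hlim (is_lim_seq_const _)).
Qed.

Lemma pow_le_fact_mul_exp (x : R) (r : nat) :
  0 <= x -> x ^ r <= INR (fact r) * exp x.
Proof.
  intro Hx; pose proof (INR_fact_lt_0 r) as Hf.
  assert (Hterm : x ^ r / INR (fact r) <= exp x).
  { eapply Rle_trans; [|exact (exp_ge_taylor x r Hx)].
    destruct r as [|r]; [simpl; lra|].
    rewrite tech5.
    assert (0 <= sum_f_R0 (fun k => x ^ k / INR (fact k)) r); [|lra].
    apply cond_pos_sum; intro k.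
    apply Rdiv_le_0_compat; [apply pow_le, Hx | apply INR_fact_lt_0]. }
  apply (Rmult_le_compat_l (INR (fact r))) in Hterm; [|lra].
  now replace (INR (fact r) * (x ^ r / INR (fact r))) with (x ^ r) in Hterm
    by (field; lra).
Qed.

Lemma exp_INR_mul (k : nat) (x : R) : exp (INR k * x) = exp x ^ k.
Proof. now rewrite <- Rpower_pow, <- (ln_exp x) at 1 by apply exp_pos. Qed.

(* e = exp(1/16)^16 and exp(-1/16) >= 15/16. *)
Lemma exp_1_le : exp 1 <= 32 / 11.
Proof.
  assert (Hinv : exp (1 / 16) * exp (- (1 / 16)) = 1)
    by (rewrite <- exp_plus, Rplus_opp_r; apply exp_0).
  pose proof (exp_ineq1_le (- (1 / 16))); pose proof (exp_pos (1 / 16)).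
  assert (H16 : exp (1 / 16) <= 16 / 15) by nra.
  replace 1 with (INR 16 * (1 / 16)) by (simpl; lra).
  rewrite exp_INR_mul; apply Rle_trans with ((16 / 15) ^ 16).
  - apply pow_incr; lra.
  - simpl; lra.
Qed.

Lemma is_series_le_of_bounds (t b : nat -> R) (lb : R) :
  (forall n, 0 <= t n <= b n) -> is_series b lb ->
  exists l, is_series t l /\ l <= lb.
Proof.
  intros Htb Hb.
  assert (Hex : ex_series t).
  { apply (@ex_series_le R_AbsRing R_CompleteNormedModule t b).
    - intro n; change (norm (t n)) with (Rabs (t n)).
      rewrite Rabs_pos_eq; apply Htb.
    - now exists lb. }
  exists (Series t); split; [now apply Series_correct|].
  rewrite <- (is_series_unique _ _ Hb).
  apply Series_le; [exact Htb | now exists lb].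
Qed.

Lemma a_diff_mul_pow_bounds (r n : nat) :
  0 <= (a (S (S n)) - a (S n)) * INR (S n) ^ r
    <= 3 / 4 * INR (fact r) * (exp 1 / 4) ^ S n.
Proof.
  destruct (a_succ_sub_bounds (S n) ltac:(lia)) as [Hd0 Hd].
  pose proof (pow_le (INR (S n)) r (pos_INR _)).
  assert (Hpow : INR (S n) ^ r <= INR (fact r) * exp 1 ^ S n).
  { rewrite <- exp_INR_mul, Rmult_1_r; apply pow_le_fact_mul_exp, pos_INR. }
  split; [now apply Rmult_le_pos|].
  apply Rle_trans with (3 / 4 / 4 ^ S n * (INR (fact r) * exp 1 ^ S n)).
  - now apply Rmult_le_compat.
  - unfold Rdiv; rewrite Rpow_mult_distr, pow_inv; right; ring.
Qed.

Theorem lemma4p4 (r : nat) :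
  exists l : R,
    is_series (fun n : nat => (a (S (S n)) - a (S n)) * INR (S n) ^ r) l /\
    l <= 2 * INR (fact r).
Proof.
  set (q := exp 1 / 4); set (C := 3 / 4 * INR (fact r)).
  assert (Hq : 0 < q <= 8 / 11)
    by (pose proof exp_1_le; pose proof (exp_pos 1); unfold q; lra).
  assert (Hgeom : is_series (fun n => C * q ^ S n) (C * q / (1 - q))).
  { apply (is_series_ext (fun n => q ^ n * (C * q))); [intro n; simpl; ring|].
    replace (C * q / (1 - q)) with (/ (1 - q) * (C * q)) by (field; lra).
    apply is_series_scal_r, is_series_geom; rewrite Rabs_pos_eq; lra. }
  destruct (is_series_le_of_bounds _ _ _ (a_diff_mul_pow_bounds r) Hgeom)
    as [l [Hl Hle]].
  exists l; split; [exact Hl|].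
  apply Rle_trans with (1 := Hle), Rle_div_l; [lra|].
  pose proof (INR_fact_lt_0 r); unfold C; nra.
Qed.
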